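(* Let $G$ be a finite group. Then the commuting graph $\Gamma_C(G)$ is minimally edge connected if and only if $G$ is abelian.
   Context: The commuting graph $\Gamma_C(G)$ of a group $G$ is the simple undirected graph with vertex set $G$ in which two distinct elements $x,y$ are adjacent if and only if $xy=yx$. For a connected graph $\Gamma$, an edge cut-set is a set $S$ of edges such that $\Gamma-S$ is disconnected or has just one vertex, and the edge connectivity $\kappa'(\Gamma)$ is the smallest size of an edge cut-set. $\Gamma$ is minimally edge connected if $\kappa'(\Gamma-\epsilon)=\kappa'(\Gamma)-1$ for every edge $\epsilon$ of $\Gamma$. *)

From mathcomp Require Import all_boot all_fingroup.
Set Implicit Arguments. Unset Strict Implicit. Unset Printing Implicit Defensive.

Section Graphs.
Variable T : finType.

(* A simple graph on vertex set T is given by its edge set E, a set of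
   2-element subsets {x, y} of T. *)
Definition adjE (E : {set {set T}}) : rel T :=
  fun x y => (x != y) && ([set x; y] \in E).

Definition connectedE (E : {set {set T}}) : bool :=
  [forall x, forall y, connect (adjE E) x y].

Definition edge_cutset (E S : {set {set T}}) : bool :=
  (S \subset E) && (~~ connectedE (E :\: S) || (#|T| == 1)).

(* Edge connectivity: the smallest size of an edge cut-set (E itself is
   always an edge cut-set, so #|E| is a correct default). *)
Definition edge_conn (E : {set {set T}}) : nat :=
  \big[minn/#|E|]_(S : {set {set T}} | edge_cutset E S) #|S|.

Definition min_edge_connected (E : {set {set T}}) : Prop :=
  connectedE E /\
  forall e, e \in E -> edge_conn (E :\ e) = (edge_conn E).-1.

End Graphs.

Definition commuting_edges (gT : finGroupType) : {set {set gT}} :=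
  [set [set p.1; p.2] | p in
     [set p : gT * gT | (p.1 != p.2) && (p.1 * p.2 == p.2 * p.1)%g]].

From mathcomp Require Import all_boot all_fingroup zify.
Set Implicit Arguments. Unset Strict Implicit. Unset Printing Implicit Defensive.

(* Cuts are bounded below by counting: if u and v lie in different components
   of F, then z |-> {z, v} (z joined to u) or {u, z} (z not joined to u) maps
   every z != u injectively to a pair that crosses the component of u, hence
   is not an edge of F.
   For abelian G the commuting graph is complete, so this gives edge
   connectivity |G| - 1, and |G| - 2 once an edge is deleted.
   Otherwise let x0 have a centralizer of least order m; its star shows that
   the edge connectivity is at most m - 1. By the class equation some b != 1
   has |C(b)| > m, and deleting the edge {1, b} leaves edge connectivity at
   least m - 1: counting cross pairs against the centralizer of the far
   vertex, a cut separating some w from 1 has at least |C(w)| - 1 edges if it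
   keeps b with 1 (no cross pair is then {1, b}), and at least |C(b)| - 2 if
   it separates b from 1. *)

Section EdgeConnectivity.
Variable T : finType.
Implicit Types (E F G S : {set {set T}}) (x y u v w z : T).

Definition complete E := forall x y, x != y -> [set x; y] \in E.

Lemma adjE_sym F : symmetric (adjE F).
Proof. by move=> x y; rewrite /adjE eq_sym setUC. Qed.

Lemma set2_inj x : injective (fun y => [set x; y]).
Proof.
move=> y y' eq_xy; have /set2P[yx|//] : y \in [set x; y'] by rewrite -eq_xy set22.
have /set2P[|->//] : y' \in [set x; y] by rewrite eq_xy set22.
by rewrite yx.
Qed.

Lemma connect_sink (e : rel T) x y : (forall z, ~~ e x z) -> connect e x y -> y = x.
Proof. by move=> sink /connectP[[|z p] //= /andP[]]; rewrite (negbTE (sink z)). Qed.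

Lemma exists_not_connect (e : rel T) u v : symmetric e -> ~~ connect e u v ->
  forall x, exists w, ~~ connect e x w.
Proof.
move=> sym_e nuv x; have [xu|] := boolP (connect e x u); last by exists u.
exists v; apply: contra nuv; apply: connect_trans.
by rewrite (sym_connect_sym sym_e).
Qed.

Lemma not_connectedE_sink F x : 1 < #|T| -> (forall A, A \in F -> x \notin A) ->
  ~~ connectedE F.
Proof.
move=> /card_gt1P[a [b [_ _ ab]]] Fx.
have [y yx] : exists y, y != x.
  by have [ax|] := eqVneq a x; [exists b; rewrite -ax eq_sym | exists a].
apply/negP => /forallP/(_ x)/forallP/(_ y)/connect_sink sink.
by move: yx; rewrite sink ?eqxx // => z; apply/andP=> -[_ /Fx]; rewrite set21.
Qed.

Lemma bigmin_leq (I : eqType) (r : seq I) (P : pred I) (f : I -> nat) c i :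
  i \in r -> P i -> \big[minn/c]_(j <- r | P j) f j <= f i.
Proof.
elim: r => [|a r IHr] //=; rewrite inE big_cons => /orP[/eqP<- ->|ir Pi].
  exact: geq_minl.
by case: ifP => _; rewrite ?geq_min IHr ?orbT.
Qed.

Lemma edge_conn_le_cut E S : S \subset E -> ~~ connectedE (E :\: S) ->
  edge_conn E <= #|S|.
Proof.
by move=> sSE ncS; apply: bigmin_leq; rewrite ?mem_index_enum // /edge_cutset sSE ncS.
Qed.

Lemma edge_conn_le_star E x : 1 < #|T| -> edge_conn E <= #|[set A in E | x \in A]|.
Proof.
move=> T_gt1; apply: edge_conn_le_cut; first by apply/subsetP=> A; rewrite inE => /andP[].
apply: (not_connectedE_sink (x := x)) => // A.
by rewrite !inE => /andP[]; case: (A \in E).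
Qed.

Lemma edge_conn_ge E k : 1 < #|T| ->
  (forall S u v, S \subset E -> ~~ connect (adjE (E :\: S)) u v -> k <= #|S|) ->
  k <= edge_conn E.
Proof.
move=> T_gt1 cutE; apply: (big_ind (fun n => k <= n)) => [||S].
- (* the default value #|E| of the minimum is the size of the cut E itself *)
  have [x _] := card_gt0P (ltnW T_gt1).
  have /forallPn[u /forallPn[v]] : ~~ connectedE (E :\: E).
    by rewrite setDv; apply: (not_connectedE_sink (x := x)) => // A; rewrite inE.
  exact: cutE.
- by move=> m n km kn; rewrite leq_min km kn.
case/andP=> sSE /orP[/forallPn[u /forallPn[v]] | /eqP T1]; first exact: cutE.
by rewrite T1 in T_gt1.
Qed.

Lemma card_star_setD1 E e x : e \in E -> x \in e ->
  #|[set A in E :\ e | x \in A]| = #|[set A in E | x \in A]|.-1.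
Proof.
move=> eE xe; rewrite (cardsD1 e [set A in E | x \in A]) inE eE xe /=.
by apply: eq_card => A; rewrite !inE andbA.
Qed.

Lemma leq_card_setDD G S : #|G :\: (G :\: S)| <= #|S|.
Proof. by rewrite setDDr setDv set0U subset_leq_card ?subsetIr. Qed.

Lemma leq_card_setD1D G e S : #|G :\: ((G :\ e) :\: S)| <= #|S|.+1.
Proof.
rewrite setDDr (leq_trans (leq_card_setU _ _)) // -add1n leq_add //.
  by rewrite setDDr setDv set0U -(cards1 e) subset_leq_card ?subsetIr.
by rewrite subset_leq_card ?subsetIr.
Qed.

Section CrossPairs.
Variables (F : {set {set T}}) (u v : T).
Hypothesis not_uv : ~~ connect (adjE F) u v.

Definition cross_pair z := if connect (adjE F) u z then [set z; v] else [set u; z].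

Lemma cross_pair_notin z : cross_pair z \notin F.
Proof.
rewrite /cross_pair; case: ifP => uz; apply/negP => zF.
- have zv : z != v by apply: contraNneq not_uv => <-.
  by case/negP: not_uv; apply: connect_trans uz (connect1 _); rewrite /adjE zv.
- have zu : z != u by apply: contraFneq uz => ->.
  by case/negP: uz; apply: connect1; rewrite /adjE eq_sym zu.
Qed.

Lemma cross_pair_neq z a b : connect (adjE F) u a -> connect (adjE F) u b ->
  cross_pair z != [set a; b].
Proof.
move=> ua ub; rewrite /cross_pair; case: ifP => uz; apply/negP => /eqP eq_ab.
- have : v \in [set a; b] by rewrite -eq_ab set22.
  by case/set2P => vab; move: not_uv; rewrite vab ?ua ?ub.
- have : z \in [set a; b] by rewrite -eq_ab set22.
  by case/set2P => zab; rewrite zab ?ua ?ub in uz.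
Qed.

Lemma cross_pair_in G z : (z != v -> [set z; v] \in G) -> [set u; z] \in G ->
  cross_pair z \in G.
Proof.
move=> zvG uzG; rewrite /cross_pair; case: ifP => // uz.
by apply: zvG; apply: contraNneq not_uv => <-.
Qed.

Lemma cross_pair_inj : {in [set~ u] &, injective cross_pair}.
Proof.
have uv : u != v by apply: contraNneq not_uv => ->.
move=> z z'; rewrite !in_setC1 => zu z'u; rewrite /cross_pair.
case: ifP => uz; case: ifP => uz' eq_zz'; last exact: set2_inj eq_zz'.
- by apply: (@set2_inj v); rewrite /= setUC eq_zz' setUC.
- have : v \in [set u; z'] by rewrite -eq_zz' set22.
  case/set2P => [vu|vz']; first by rewrite vu eqxx in uv.
  have : z \in [set u; z'] by rewrite -eq_zz' set21.
  by case/set2P => zz'; [rewrite zz' eqxx in zu | move: not_uv; rewrite vz' -zz' uz].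
- have : v \in [set u; z] by rewrite eq_zz' set22.
  case/set2P => [vu|vz]; first by rewrite vu eqxx in uv.
  have : z' \in [set u; z] by rewrite eq_zz' set21.
  by case/set2P => zz'; [rewrite zz' eqxx in z'u | move: not_uv; rewrite vz -zz' uz'].
Qed.

Lemma card_le_cross G (A : {set T}) : A \subset [set~ u] ->
  {in A, forall z, cross_pair z \in G} -> #|A| <= #|G :\: F|.
Proof.
move=> sAu AG; rewrite -(card_in_imset (sub_in2 (subsetP sAu) cross_pair_inj)).
apply/subset_leq_card/subsetP => _ /imsetP[z zA ->].
by rewrite inE cross_pair_notin AG.
Qed.

End CrossPairs.

Lemma complete_connectedE E : complete E -> connectedE E.
Proof.
move=> cE; apply/forallP => x; apply/forallP => y.
by have [->|xy] := eqVneq x y; rewrite ?connect0 // connect1 // /adjE xy cE.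
Qed.

Lemma complete_cut_card G F u v : complete G -> ~~ connect (adjE F) u v ->
  #|T|.-1 <= #|G :\: F|.
Proof.
move=> cG nuv; rewrite -(cardsC1 u); apply: (card_le_cross nuv) => // z.
by rewrite in_setC1 => zu; apply: (cross_pair_in nuv) => [zv|]; rewrite cG // eq_sym.
Qed.

End EdgeConnectivity.

Local Open Scope group_scope.

Section CentralizerOrders.
Variable gT : finGroupType.
Implicit Types b c x : gT.

Lemma card_cent1_class x : (#|'C[x]| * #|x ^: [set: gT]|)%N = #|gT|.
Proof.
by rewrite -index_cent1 setTI Lagrange ?subsetT ?cardsT.
Qed.

Lemma cent1_card_gt1 x : x != 1 -> 1 < #|'C[x]|.
Proof. by move=> x1; apply/card_gt1P; exists 1, x; rewrite group1 cent1id eq_sym. Qed.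

Lemma abelianT_cent1 : abelian [set: gT] <-> forall x, 'C[x] = [set: gT].
Proof.
rewrite abelianE; split=> [cGG x | CT].
  by apply/setP => y; rewrite in_setT; apply/cent1P; apply: (centsP cGG); rewrite inE.
by apply/centsP => x _ y _; apply/cent1P; rewrite CT.
Qed.

(* Class equation: all nontrivial classes have the same size d, so d divides
   both #|G| and #|G| - 1. *)
Lemma abelian_cent1_card_const m :
  (forall b, b != 1 -> #|'C[b]| = m) -> abelian [set: gT].
Proof.
move=> Cm; apply/abelianT_cent1 => b.
have [->|b1] := eqVneq b 1; first exact: cent11T.
set d := #|b ^: [set: gT]|.
have Cb : (#|'C[b]| * d)%N = #|gT| := card_cent1_class b.
have class_d c : c != 1 -> #|c ^: [set: gT]| = d.
  move=> c1; apply/eqP; rewrite -(eqn_pmul2l (cardG_gt0 'C[c])).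
  by rewrite card_cent1_class (Cm c c1) -(Cm b b1) Cb.
have d_sum : d %| \sum_(C in classes [set: gT] | C != 1) #|C|.
  apply: dvdn_sum => _ /andP[/imsetP[c _ ->]].
  by rewrite classG_eq1 => /class_d ->.
have class_eq := sum_card_class [set: gT].
rewrite (bigD1 1) ?classes1 //= cards1 cardsT in class_eq.
have /eqP d1 : d == 1%N by rewrite -dvdn1 -(dvdn_addl _ d_sum) class_eq -Cb dvdn_mull.
by apply/eqP; rewrite eqEcard subsetT cardsT -Cb d1 muln1 leqnn.
Qed.

End CentralizerOrders.

Section CommutingGraph.
Variable gT : finGroupType.
Local Notation CE := (commuting_edges gT).
Implicit Types (u v x y z : gT) (F : {set {set gT}}).

Lemma mem_commuting_edges x y : ([set x; y] \in CE) = (x != y) && (x \in 'C[y]).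
Proof.
rewrite cent1E; apply/imsetP/idP => [[[a b]] | /andP[xy cxy]]; last first.
  by exists (x, y); rewrite // inE xy cxy.
rewrite inE /= => /andP[ab /eqP cab] eq_xy.
have [[xa yb]|[xb ya]] : (x = a /\ y = b) \/ (x = b /\ y = a).
- have /set2P[xa|xb] : x \in [set a; b] by rewrite -eq_xy set21.
  + by left; split=> //; apply: (@set2_inj _ x); rewrite eq_xy xa.
  + by right; split=> //; apply: (@set2_inj _ x); rewrite eq_xy xb setUC.
- by rewrite xa yb ab cab eqxx.
- by rewrite xb ya eq_sym ab cab eqxx.
Qed.

Lemma commuting_edge_pair A : A \in CE -> exists x y, A = [set x; y].
Proof. by case/imsetP => [[x y]] _ ->; exists x, y. Qed.

Lemma commuting_star x : [set A in CE | x \in A] = [set [set x; y] | y in 'C[x] :\ x].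
Proof.
apply/setP => A; rewrite inE; apply/andP/imsetP => [[/[dup] AE] | [y]].
  case/commuting_edge_pair: AE => a [b ->] /[swap] /set2P[<-|<-].
    rewrite mem_commuting_edges cent1C => /andP[xb bx].
    by exists b; rewrite // in_setD1 eq_sym xb.
  rewrite (setUC [set a]) mem_commuting_edges cent1C => /andP[xa ax].
  by exists a; rewrite // in_setD1 eq_sym xa.
rewrite in_setD1 => /andP[yx xy] ->.
by rewrite set21 mem_commuting_edges cent1C eq_sym yx xy.
Qed.

Lemma card_commuting_star x : #|[set A in CE | x \in A]| = #|'C[x]|.-1.
Proof.
rewrite commuting_star card_in_imset; last by move=> y y' _ _; apply: set2_inj.
by rewrite [#|'C[x]|](cardsD1 x) cent1id.
Qed.

Lemma cross_pair_commuting F u v z : ~~ connect (adjE F) u v ->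
  z != u -> z \in 'C[u] -> z \in 'C[v] -> cross_pair F u v z \in CE.
Proof.
move=> nuv zu zCu zCv; apply: (cross_pair_in nuv) => [zv|].
  by rewrite mem_commuting_edges zv.
by rewrite mem_commuting_edges eq_sym zu cent1C.
Qed.

Lemma abelian_commuting_complete : abelian [set: gT] -> complete CE.
Proof.
by move=> /abelianT_cent1 CT x y xy; rewrite mem_commuting_edges xy CT inE.
Qed.

End CommutingGraph.

Section CommutingGraphEdgeConnectivity.
Variable gT : finGroupType.
Local Notation CE := (commuting_edges gT).

Lemma abelian_min_edge_connected : abelian [set: gT] -> min_edge_connected CE.
Proof.
move=> /[dup] /abelianT_cent1 CT /abelian_commuting_complete complCE.
split=> [|e eCE]; first exact: complete_connectedE.
have [a [b def_e]] := commuting_edge_pair eCE.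
have ab : a != b by move: eCE; rewrite def_e mem_commuting_edges => /andP[].
have G_gt1 : 1 < #|gT| by apply/card_gt1P; exists a, b.
have star x : #|[set A in CE | x \in A]| = #|gT|.-1.
  by rewrite card_commuting_star CT cardsT.
have cut_ge E u v : ~~ connect (adjE E) u v -> #|gT|.-1 <= #|CE :\: E|.
  exact: complete_cut_card.
have connCE : edge_conn CE = #|gT|.-1.
  apply/eqP; rewrite eqn_leq -{1}(star a) edge_conn_le_star //=.
  apply: edge_conn_ge => // S u v _ /cut_ge le_S.
  exact: leq_trans le_S (leq_card_setDD _ _).
have connCE1 : edge_conn (CE :\ e) = #|gT|.-2.
  apply/eqP; rewrite eqn_leq; apply/andP; split.
    by rewrite -(star a) -(card_star_setD1 (e := e)) ?edge_conn_le_star // def_e set21.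
  apply: edge_conn_ge => // S u v _ /cut_ge le_S.
  by have := leq_trans le_S (leq_card_setD1D _ _ _); lia.
by rewrite connCE connCE1.
Qed.

Lemma edge_conn_commuting_setD1_ge (x0 b : gT) :
  (forall z : gT, #|'C[x0]| <= #|'C[z]|) -> b != 1 -> #|'C[x0]| < #|'C[b]| ->
  #|'C[x0]|.-1 <= edge_conn (CE :\ [set 1; b]).
Proof.
set e := [set 1; b]; set E := CE :\ e => min_x0 b1 lt_x0b.
apply: edge_conn_ge => [|S u v _ nuv]; first by apply/card_gt1P; exists 1, b; rewrite eq_sym.
set F := E :\: S.
have cross_le (G : {set {set gT}}) w : ~~ connect (adjE F) 1 w ->
    {in 'C[w] :\ 1, forall z, cross_pair F 1 w z \in G} -> #|'C[w]|.-1 <= #|G :\: F|.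
  move=> nw crossG; rewrite [#|'C[w]|](cardsD1 1) group1.
  apply: (card_le_cross nw) crossG; apply/subsetP => z.
  by rewrite in_setD1 in_setC1 => /andP[].
have cross_CE w z : ~~ connect (adjE F) 1 w -> z \in 'C[w] :\ 1 -> cross_pair F 1 w z \in CE.
  move=> nw; rewrite in_setD1 => /andP[z1 zCw].
  by apply: cross_pair_commuting; rewrite // cent11T inE.
have [conn_b | disc_b] := boolP (connect (adjE F) 1 b).
- have [w nw] := exists_not_connect (adjE_sym F) nuv 1.
  have crossE : {in 'C[w] :\ 1, forall z, cross_pair F 1 w z \in E}.
    by move=> z zC; rewrite in_setD1 cross_pair_neq ?connect0 ?cross_CE.
  have := leq_trans (cross_le E w nw crossE) (leq_card_setDD E S).
  by have := min_x0 w; lia.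
- have := cross_le CE b disc_b (cross_CE b ^~ disc_b).
  by have := leq_card_setD1D CE e S; rewrite -/E -/F; lia.
Qed.

Lemma min_edge_connected_abelian : min_edge_connected CE -> abelian [set: gT].
Proof.
case=> _ minCE; apply/idPn => nonab.
have [x0 min_x0] : exists x0 : gT, forall z : gT, #|'C[x0]| <= #|'C[z]|.
  have [x0 _ min_x0] := @arg_minnP gT 1 predT (fun z : gT => #|'C[z]|) isT.
  by exists x0 => z; apply: min_x0.
have [b b1 lt_x0b] : exists2 b : gT, b != 1 & #|'C[x0]| < #|'C[b]|.
  apply/exists_inP; apply: contraR nonab => /exists_inPn small.
  apply: (@abelian_cent1_card_const _ #|'C[x0]|) => b /small.
  by rewrite -leqNgt => le_b; apply/eqP; rewrite eqn_leq le_b min_x0.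
have x01 : x0 != 1.
  by apply: contraTneq lt_x0b => ->; rewrite cent11T cardsT -leqNgt max_card.
have G_gt1 : 1 < #|gT| by apply/card_gt1P; exists 1, b; rewrite eq_sym.
have e_CE : [set 1; b] \in CE by rewrite mem_commuting_edges eq_sym b1 group1.
have := edge_conn_commuting_setD1_ge min_x0 b1 lt_x0b; rewrite minCE //.
have := edge_conn_le_star CE x0 G_gt1; rewrite card_commuting_star.
by have := cent1_card_gt1 x01; lia.
Qed.

End CommutingGraphEdgeConnectivity.

Theorem mainTheorem7 (gT : finGroupType) :
  min_edge_connected (commuting_edges gT) <-> abelian [set: gT].
Proof.
split; [exact: min_edge_connected_abelian | exact: abelian_min_edge_connected].
Qed.
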